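(* Let $G$ be a finite group and $[H],[K]\in\widetilde\Pi(G)$. Let \[X=\bigcap_{\substack{\bar L\in\mathcal{L}(G)\\ \pi_e(H),\pi_e(K)\subseteq\pi_e(\bar L)}}\pi_e(\bar L).\] Then $\{[H],[K]\}$ has a least upper bound in $\widetilde\Pi(G)$ if and only if there exists a subgroup $L'\le G$ with $\pi_e(L')=X$, and in that case the least upper bound is $[L']$. Similarly, let \[Y=\bigcup_{\substack{\widehat L\in\mathcal{L}(G)\\ \pi_e(\widehat L)\subseteq\pi_e(H)\text{ and }\pi_e(\widehat L)\subseteq\pi_e(K)}}\pi_e(\widehat L).\] Then $\{[H],[K]\}$ has a greatest lower bound in $\widetilde\Pi(G)$ if and only if there exists a subgroup $L''\le G$ with $\pi_e(L'')=Y$, and in that case the greatest lower bound is $[L'']$.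
   Context: For a finite group $G$ and a subgroup $H\le G$, let $\pi_e(H)=\{o(x)\mid x\in H\}$. Let $\mathcal{L}(G)$ be the set of subgroups of $G$; define $H_1\equiv H_2$ iff $\pi_e(H_1)=\pi_e(H_2)$, with class $[H]$. The poset $\widetilde\Pi(G)$ is $\mathcal{L}(G)/\!\equiv$ ordered by $[H_1]\lesssim[H_2]$ iff $\pi_e(H_1)\subseteq\pi_e(H_2)$. *)

From mathcomp Require Import all_boot all_fingroup.
Set Implicit Arguments. Unset Strict Implicit. Unset Printing Implicit Defensive.
Local Open Scope group_scope.

Definition pi_e (gT : finGroupType) (A : {set gT}) : pred nat :=
  [pred n | [exists x in A, #[x] == n]].

(* [A] <~ [B] in Pi~(G): pi_e(A) ⊆ pi_e(B). *)
Definition pe_le (gT : finGroupType) (A B : {set gT}) : Prop :=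
  {subset pi_e A <= pi_e B}.

Definition is_lub (gT : finGroupType) (G H K L : {group gT}) : Prop :=
  [/\ L \subset G, pe_le H L, pe_le K L &
      forall M : {group gT}, M \subset G -> pe_le H M -> pe_le K M -> pe_le L M].

Definition is_glb (gT : finGroupType) (G H K L : {group gT}) : Prop :=
  [/\ L \subset G, pe_le L H, pe_le L K &
      forall M : {group gT}, M \subset G -> pe_le M H -> pe_le M K -> pe_le M L].

Definition Xset (gT : finGroupType) (G H K : {group gT}) (n : nat) : Prop :=
  forall Lb : {group gT}, Lb \subset G -> pe_le H Lb -> pe_le K Lb -> n \in pi_e Lb.

Definition Yset (gT : finGroupType) (G H K : {group gT}) (n : nat) : Prop :=
  exists Lh : {group gT}, [/\ Lh \subset G, pe_le Lh H, pe_le Lh K & n \in pi_e Lh].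

From mathcomp Require Import all_boot all_fingroup.

(* No group theory is involved: [pe_le] is a preorder on subgroups of G, X is
   the meet of the upper bounds of {H, K} and Y the join of their lower
   bounds.  An upper bound realising X lies below every upper bound, and a
   least upper bound L realises X because L is one of the upper bounds
   intersected while lying below all of them; dually for Y. *)

Set Implicit Arguments.
Unset Strict Implicit.
Unset Printing Implicit Defensive.

Section BoundsInPiTilde.

Variables (gT : finGroupType) (G H K : {group gT}).

Lemma is_lubP (L : {group gT}) :
  is_lub G H K L -> forall n, n \in pi_e L <-> Xset G H K n.
Proof.
move=> [sLG leHL leKL minL] n; split; first by move=> Ln M sMG leHM leKM; exact: minL.
by apply; [exact: sLG | exact: leHL | exact: leKL].
Qed.

Lemma Xset_is_lub (L : {group gT}) :
  L \subset G -> (forall n, n \in pi_e L <-> Xset G H K n) -> is_lub G H K L.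
Proof.
move=> sLG piL; split=> //.
- by move=> n Hn; apply/piL => M _ leHM _; exact: leHM.
- by move=> n Kn; apply/piL => M _ _ leKM; exact: leKM.
- by move=> M sMG leHM leKM n /piL; apply.
Qed.

Lemma is_lub_pi_e_eq (L1 L2 : {group gT}) :
  is_lub G H K L1 -> is_lub G H K L2 -> pi_e L1 =i pi_e L2.
Proof.
move=> [sL1G leHL1 leKL1 minL1] [sL2G leHL2 leKL2 minL2] n.
by apply/idP/idP; [exact: minL1 | exact: minL2].
Qed.

Lemma is_glbP (L : {group gT}) :
  is_glb G H K L -> forall n, n \in pi_e L <-> Yset G H K n.
Proof.
move=> [sLG leLH leLK maxL] n; split; first by exists L.
by move=> [M [sMG leMH leMK Mn]]; exact: (maxL M).
Qed.

Lemma Yset_is_glb (L : {group gT}) :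
  L \subset G -> (forall n, n \in pi_e L <-> Yset G H K n) -> is_glb G H K L.
Proof.
move=> sLG piL; split=> //.
- by move=> n /piL [M [_ leMH _ Mn]]; exact: leMH.
- by move=> n /piL [M [_ _ leMK Mn]]; exact: leMK.
- by move=> M sMG leMH leMK n Mn; apply/piL; exists M.
Qed.

Lemma is_glb_pi_e_eq (L1 L2 : {group gT}) :
  is_glb G H K L1 -> is_glb G H K L2 -> pi_e L1 =i pi_e L2.
Proof.
move=> [sL1G leL1H leL1K maxL1] [sL2G leL2H leL2K maxL2] n.
by apply/idP/idP; [exact: maxL2 | exact: maxL1].
Qed.

End BoundsInPiTilde.

Theorem lemma2p4 (gT : finGroupType) (G H K : {group gT})
  (sHG : H \subset G) (sKG : K \subset G) :
  ((exists L : {group gT}, is_lub G H K L) <->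
     (exists L' : {group gT}, L' \subset G /\ forall n, n \in pi_e L' <-> Xset G H K n))
  /\ (forall L' : {group gT}, L' \subset G -> (forall n, n \in pi_e L' <-> Xset G H K n) ->
        is_lub G H K L' /\
        forall L : {group gT}, is_lub G H K L -> pi_e L =i pi_e L')
  /\ ((exists L : {group gT}, is_glb G H K L) <->
     (exists L'' : {group gT}, L'' \subset G /\ forall n, n \in pi_e L'' <-> Yset G H K n))
  /\ (forall L'' : {group gT}, L'' \subset G -> (forall n, n \in pi_e L'' <-> Yset G H K n) ->
        is_glb G H K L'' /\
        forall L : {group gT}, is_glb G H K L -> pi_e L =i pi_e L'').
Proof.
split; [|split; [|split]].
- split=> [[L lubL] | [L [sLG piL]]]; exists L; last exact: Xset_is_lub.
  by split; [case: lubL | exact: is_lubP].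
- move=> L' sL'G piL'; have lubL' := Xset_is_lub sL'G piL'.
  by split=> // L lubL; exact: is_lub_pi_e_eq lubL lubL'.
- split=> [[L glbL] | [L [sLG piL]]]; exists L; last exact: Yset_is_glb.
  by split; [case: glbL | exact: is_glbP].
- move=> L'' sL''G piL''; have glbL'' := Yset_is_glb sL''G piL''.
  by split=> // L glbL; exact: is_glb_pi_e_eq glbL glbL''.
Qed.
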